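(* Let $X$ be a separable Banach space over $\mathbb{K}\in\{\mathbb{R},\mathbb{C}\}$ and $T\colon X\to X$ a bounded linear operator. If $T$ is densely uniformly Li-Yorke chaotic, then $T$ admits a dense irregular manifold.
   Context: A subset $S\subset X$ with at least two points is uniformly Li-Yorke scrambled for $T$ if there exist sequences $\{p_n\}$, $\{q_n\}$ in $\mathbb{N}$ such that for all distinct $x,y\in S$: $\lim_n\|T^{p_n}x-T^{p_n}y\|=0$ and $\lim_n\|T^{q_n}x-T^{q_n}y\|=\infty$; $T$ is densely uniformly Li-Yorke chaotic if there is a dense, uncountable such set. A vector $x$ is irregular for $T$ if $\liminf_n\|T^nx\|=0$ and $\limsup_n\|T^nx\|=\infty$. An irregular manifold is a vector subspace $Y\subset X$ every non-zero vector of which is irregular for $T$. *)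

From HB Require Import structures.
From mathcomp Require Import all_boot all_order all_algebra.
From mathcomp Require Import all_classical all_reals all_analysis.
From mathcomp Require Import complex.

Set Implicit Arguments.
Unset Strict Implicit.
Unset Printing Implicit Defensive.

Import Order.TTheory GRing.Theory Num.Theory.
Import numFieldNormedType.Exports.
Local Open Scope classical_set_scope.
Local Open Scope ring_scope.

Inductive scalar_kind := RealScalars | ComplexScalars.

Definition scalars (R : realType) (k : scalar_kind) : numFieldType :=
  match k with
  | RealScalars => (R : numFieldType)
  | ComplexScalars => ((complex R) : numFieldType)
  end.

Section Defs.
Context (K : numFieldType) (X : normedModType K).

Definition separable_space : Prop :=
  exists D : set X, countable D /\ dense D.

Definition unif_LY_scrambled (T : X -> X) (S : set X) : Prop :=
  (exists x y, S x /\ S y /\ x <> y) /\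
  exists p q : nat -> nat,
    forall x y, S x -> S y -> x <> y ->
      ((fun n => `|iter (p n) T x - iter (p n) T y|) @ \oo --> (0 : K)) /\
      ((fun n => `|iter (q n) T x - iter (q n) T y|) @ \oo --> +oo_K).

Definition densely_unif_LY_chaotic (T : X -> X) : Prop :=
  exists S : set X, dense S /\ ~ countable S /\ unif_LY_scrambled T S.

(* x is irregular: liminf_n ||T^n x|| = 0 and limsup_n ||T^n x|| = +oo,
   written out for the nonnegative sequence ||T^n x||. *)
Definition irregular (T : X -> X) (x : X) : Prop :=
  (forall e : K, 0 < e -> forall N : nat,
      exists2 n : nat, (N <= n)%N & `|iter n T x| < e) /\
  (forall M : K, M \is Num.real -> forall N : nat,
      exists2 n : nat, (N <= n)%N & M < `|iter n T x|).

Definition vector_subspace (Y : set X) : Prop :=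
  Y 0 /\ forall (a : K) (u v : X), Y u -> Y v -> Y (a *: u + v).

Definition irregular_manifold (T : X -> X) (Y : set X) : Prop :=
  vector_subspace Y /\ forall x, Y x -> x <> 0 -> irregular T x.

End Defs.

From HB Require Import structures.
From mathcomp Require Import all_boot all_order all_algebra.
From mathcomp Require Import all_classical all_reals all_analysis.
From mathcomp Require Import complex.
From mathcomp Require Import ring.

(* Let p be the sequence along which the pairs of a scrambled set S become
   asymptotic. The vectors u with T^(p n) u -> 0 form a subspace X0, which is
   dense (it contains S - x1 for any x1 in S) and contains a vector with
   unbounded orbit (x1 - y1 for a scrambled pair). Hence for every finite
   H in X0 and L > 0 there are arbitrarily small g in X0 and times r with
   ||T^r g|| >= L (1 + sum_(h in H) ||T^r h||): otherwise a halving argument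
   would bound every orbit in X0.
   Starting from a dense sequence x_k in X0, add recursively such "bumps" g_j,
   g_j going to x_k for k the 2-adic valuation of j + 1, so that every
   y_k = x_k + sum g_j receives infinitely many of them. At the time r_j of
   bump j the orbit of any nonzero combination of the y_k is large; at a
   later time m_j, chosen along p, everything built so far is small; and
   each bump is so small that it cannot spoil any earlier time. So every
   nonzero vector of span (y_k) is irregular, and the span is dense because
   y_k is close to x_k. *)

Set Implicit Arguments.
Unset Strict Implicit.
Unset Printing Implicit Defensive.

Import Order.TTheory GRing.Theory Num.Theory.
Import numFieldNormedType.Exports.
Local Open Scope classical_set_scope.
Local Open Scope ring_scope.

Lemma halving_bounded (K : numFieldType) (s : nat -> K) N : (0 < N)%N ->
  (forall r, 0 <= s r) -> (forall r, s (r + N)%N <= (1 + s r) / 2) ->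
  forall r, s r <= 1 + \sum_(i < N) s i.
Proof.
move=> N_gt0 s_ge0 s_half; set B := 1 + _.
have B_ge1 : 1 <= B by rewrite lerDl sumr_ge0.
elim/ltn_ind => r IH; have [rN|Nr] := ltnP r N.
  apply: (@le_trans _ _ (\sum_(i < N) s i)); last by rewrite lerDr.
  by rewrite (bigD1 (Ordinal rN)) //= lerDl sumr_ge0.
rewrite -(subnK Nr) (le_trans (s_half _)) // ler_pdivrMr // mulr_natr mulr2n.
by rewrite lerD // IH // ltn_subrL N_gt0 (leq_trans N_gt0).
Qed.

Lemma sum_inv_pow2_le (K : numFieldType) N N' : (N <= N')%N ->
  \sum_(N <= i < N') (2 ^+ i.+1)^-1 <= (2 ^+ N)^-1 :> K.
Proof.
move=> NN'; rewrite (telescope_sumr_eq (fun i => - (2 ^+ i)^-1)) //.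
  by rewrite opprK addrC gerDl oppr_le0 invr_ge0 exprn_ge0.
by move=> i _; rewrite exprS; field; rewrite expf_neq0 // pnatr_eq0.
Qed.

Lemma inv_pow2S_le (K : numFieldType) i : (2 ^+ i.+1)^-1 <= i.+1%:R^-1 :> K.
Proof. by rewrite lef_pV2 ?posrE ?exprn_gt0 ?ltr0n // -natrX ler_nat ltnW // ltn_expl. Qed.

Lemma archi_nat_gt (K : numFieldType) : Num.archimedean_axiom K ->
  forall x : K, x \is Num.real -> \forall n \near \oo, x < n%:R.
Proof.
move=> archi x xr; have [N xN] := archi x; near=> n.
rewrite (le_lt_trans (real_ler_norm xr)) // (lt_le_trans xN) // ler_nat.
by near: n; exact: nbhs_infty_ge.
Unshelve. all: by end_near.
Qed.

Lemma archi_inv_pow2_lt (K : numFieldType) : Num.archimedean_axiom K ->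
  forall e : K, 0 < e -> exists N, (2 ^+ N)^-1 < e.
Proof.
move=> archi e e_gt0; have [N eN] := archi e^-1; exists N.
rewrite -[e]invrK ltf_pV2 ?posrE ?exprn_gt0 ?invr_gt0 //.
rewrite -[e^-1]ger0_norm ?invr_ge0 ?ltW // (lt_le_trans eN) // -natrX ler_nat.
by rewrite ltnW // ltn_expl.
Qed.

Lemma unbounded_from (K : numFieldType) (u : nat -> K) : (forall n, 0 <= u n) ->
  (forall M, M \is Num.real -> exists n, M < u n) ->
  forall M, M \is Num.real -> forall N, exists2 n, (N <= n)%N & M < u n.
Proof.
move=> u_ge0 unb M Mr N; set S := \sum_(i < N) u i.
have S_ge0 : 0 <= S by exact: sumr_ge0.
have [n hn] := unb (`|M| + S) (realD (normr_real M) (ger0_real S_ge0)).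
exists n; last by rewrite (le_lt_trans _ hn) // (le_trans (real_ler_norm Mr)) // lerDl.
rewrite leqNgt; apply/negP => nN.
have unS : u n <= S by rewrite /S (bigD1 (Ordinal nN)) //= lerDl sumr_ge0.
by have := lt_le_trans hn unS; rewrite gtrDr normr_lt0.
Qed.

Lemma logn2S_infinitely_often k N : exists2 j, (N <= j)%N & logn 2 j.+1 = k.
Proof.
have pk : (0 < 2 ^ k)%N by rewrite expn_gt0.
have j_gt0 : (0 < 2 ^ k * N.*2.+1)%N by rewrite muln_gt0 pk.
exists (2 ^ k * N.*2.+1).-1.
  by rewrite -ltnS prednK // (leq_trans _ (leq_pmull _ pk)) // ltnS -addnn leq_addr.
rewrite prednK // lognM // pfactorK // logn_coprime ?addn0 //.
by rewrite coprime2n /= odd_double.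
Qed.

Lemma dependent_choice_seq (A : choiceType) (Q : A -> Prop) (P : seq A -> A -> Prop) :
  (forall s : seq A, {in s, forall a, Q a} -> exists2 a, Q a & P s a) ->
  exists f : nat -> A, forall j, Q (f j) /\ P [seq f i | i <- iota 0 j] (f j).
Proof.
move=> extend.
have /choice[next nextP] s : exists a, {in s, forall a, Q a} -> Q a /\ P s a.
  have [Qs|nQs] := pselect {in s, forall a, Q a}.
    by have [a Qa Psa] := extend s Qs; exists a.
  by case: s nQs => [|a s] nQs; [case: nQs | exists a].
pose hist j := iter j (fun s => rcons s (next s)) [::].
have histE j : hist j = [seq next (hist i) | i <- iota 0 j].
  elim: j => [//|j IH]; rewrite -addn1 iotaD map_cat /= -IH cats1.
  by rewrite /hist addn1.
have Qhist j : {in hist j, forall a, Q a}.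
  elim: j => [//|j IH] a; rewrite /hist iterS -/(hist j) mem_rcons inE.
  by case/predU1P => [->|/IH //]; exact: (nextP _ IH).1.
exists (fun j => next (hist j)) => j; rewrite -histE; exact: nextP.
Qed.

Lemma norm_lim_le (K : numFieldType) (V : normedModType K) (u : nat -> V) l (b : K) :
  u @ \oo --> l -> (\forall n \near \oo, `|u n| <= b) -> `|l| <= b.
Proof.
move=> ul ub; apply/ler_addgt0Pr => e e_gt0; near \oo => n.
rewrite -[l](subrK (u n)) addrC (le_trans (ler_normD _ _)) // lerD //; near: n => //.
by apply: filterS ((cvgrPdist_lt _ _).1 ul e e_gt0) => n /ltW.
Unshelve. all: by end_near.
Qed.

Lemma dense_subset (T : topologicalType) (A B : set T) : A `<=` B -> dense A -> dense B.
Proof.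
move=> AB dA O O0 oO; have [z [Oz Az]] := dA O O0 oO.
by exists z; split => //; exact: AB.
Qed.

Lemma continuous_linear_bound (K : numFieldType) (V W : normedModType K)
    (f : {linear V -> W}) :
  continuous f -> exists2 c : K, 0 <= c & forall v, `|f v| <= c * `|v|.
Proof.
move=> f_cont; have := (linear_boundedP f).1 ((linear_bounded_continuous f).2 f_cont).
by case/pinfty_ex_gt0 => c c_gt0 fc; exists c => //; exact: ltW.
Qed.

Section LinearIterates.
Variables (K : numFieldType) (X : normedModType K).

Lemma iter_linear (T : {linear X -> X}) n : linear (iter n T).
Proof. by elim: n => [//|n IH] a u v; rewrite iterS IH linearP. Qed.

HB.instance Definition _ (T : {linear X -> X}) n :=
  GRing.isLinear.Build K X X *:%R (iter n T) (iter_linear T n).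

Variable T : {linear X -> X}.

Lemma iter_linearZ n (a : K) u : iter n T (a *: u) = a *: iter n T u.
Proof. exact: linearZ_LR. Qed.

Lemma norm_iter_comb_le n (a : nat -> K) (v : nat -> X) t :
  `|iter t T (\sum_(k < n) a k *: v k)| <= \sum_(k < n) `|a k| * `|iter t T (v k)|.
Proof.
rewrite raddf_sum; apply: le_trans (ler_norm_sum _ _ _) _.
by apply: ler_sum => k _; rewrite /= iter_linearZ normrZ.
Qed.

Lemma continuous_iter : continuous T -> forall n, continuous (iter n T).
Proof.
move=> T_cont; elim => [|n IH] x; first exact: cvg_id.
exact: continuous_comp (IH x) (T_cont _).
Qed.

Lemma norm_iter_le (c : K) : 0 <= c -> (forall x, `|T x| <= c * `|x|) ->
  forall n x, `|iter n T x| <= c ^+ n * `|x|.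
Proof.
move=> c_ge0 normT_le; elim=> [|n IH] x; first by rewrite expr0 mul1r.
by rewrite iterS exprS -mulrA (le_trans (normT_le _)) // ler_wpM2l.
Qed.

End LinearIterates.

Section VanishingOrbits.
Variables (K : numFieldType) (X : normedModType K) (T : {linear X -> X}).
Variable p : nat -> nat.
Hypothesis T_cont : continuous T.

Definition vanishing (z : X) := iter (p n) T z @[n --> \oo] --> 0.

Definition orbit_norm (H : seq X) r := \sum_(h <- H) `|iter r T h|.

Lemma vanishing0 : vanishing 0.
Proof. by rewrite /vanishing; under eq_fun do rewrite raddf0; exact: cvg_cst. Qed.

Lemma vanishingP (a : K) u v : vanishing u -> vanishing v -> vanishing (a *: u + v).
Proof.
move=> vu vv; suff : iter (p n) T (a *: u + v) @[n --> \oo] --> a *: 0 + 0.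
  by rewrite scaler0 addr0.
under eq_fun do rewrite linearP.
exact: cvgD (cvgZ (cvg_cst a) vu) vv.
Qed.

Lemma vanishing_iter j z : vanishing z -> vanishing (iter j T z).
Proof.
move=> vz; rewrite /vanishing (_ : (fun n => _) = iter j T \o (fun n => iter (p n) T z)).
  have -> : (0 : X) = iter j T 0 by rewrite raddf0.
  by apply: continuous_cvg vz; exact: continuous_iter.
by apply: funext => n /=; rewrite -!iterD addnC.
Qed.

Lemma orbit_norm_ge0 H r : 0 <= orbit_norm H r.
Proof. exact: sumr_ge0. Qed.

Lemma orbit_norm_vanishing (H : seq X) : {in H, forall h, vanishing h} ->
  orbit_norm H (p n) @[n --> \oo] --> 0.
Proof.
elim: H => [_|h H IH vH].
  by rewrite /orbit_norm; under eq_fun do rewrite big_nil; exact: cvg_cst.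
have vH' : {in H, forall u, vanishing u} by move=> u uH; apply: vH; rewrite inE uH orbT.
have -> : (fun n => orbit_norm (h :: H) (p n)) =
    (fun n => `|iter (p n) T h| + orbit_norm H (p n)).
  by apply: funext => n; rewrite /orbit_norm big_cons.
have -> : (0 : K) = `|0 : X| + 0 by rewrite normr0 addr0.
by apply: cvgD; [exact: cvg_norm (vH h (mem_head _ _)) | exact: IH vH'].
Qed.

Lemma orbit_norm_late_small (H : seq X) j (e : K) :
  {in H, forall h, vanishing h} -> 0 < e ->
  exists2 m, (j <= m)%N & orbit_norm H m < e.
Proof.
move=> vH e_gt0.
have vHj : {in map (iter j T) H, forall h, vanishing h}.
  by move=> _ /mapP[h hH ->]; exact/vanishing_iter/vH.
have [N _ hN] := (cvgr0Pnorm_lt _).1 (orbit_norm_vanishing vHj) e e_gt0.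
exists (p N + j)%N; first exact: leq_addl.
have := hN N (leqnn N); rewrite ger0_norm ?orbit_norm_ge0 // /orbit_norm big_map.
by under eq_bigr do rewrite -iterD.
Qed.

End VanishingOrbits.

Section OutgrowingVectors.
Variables (K : numFieldType) (X : normedModType K) (T : {linear X -> X}).
Variable p : nat -> nat.
Hypothesis T_cont : continuous T.
Local Notation vanishing := (vanishing T p).
Local Notation orbit_norm := (orbit_norm T).

Lemma dominated_orbits_bounded (H : seq X) (k : K) :
  0 < k -> {in H, forall h, vanishing h} ->
  (forall x r, vanishing x -> `|iter r T x| <= k * `|x| * (1 + orbit_norm H r)) ->
  forall x, vanishing x -> exists B, forall r, `|iter r T x| <= B.
Proof.
move=> k_gt0 vH dom.
have e_gt0 : 0 < (2 * k)^-1 by rewrite invr_gt0 mulr_gt0.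
have [m m_gt0 mH] := orbit_norm_late_small T_cont 1 vH e_gt0.
(* Dominating the orbits of the T^m h, which have total norm < 1/(2k), halves
   the orbit norm of H every m steps. *)
have halving r : orbit_norm H (r + m) <= (1 + orbit_norm H r) / 2.
  rewrite /orbit_norm big_seq.
  under eq_bigr do rewrite iterD.
  have dom_m h : h \in H -> `|iter r T (iter m T h)| <=
      k * `|iter m T h| * (1 + orbit_norm H r).
    by move=> hH; exact/dom/vanishing_iter/vH.
  rewrite (le_trans (ler_sum _ dom_m)) //.
  rewrite -big_seq -mulr_suml -mulr_sumr -/(orbit_norm H m) -/(orbit_norm H r).
  rewrite [leLHS]mulrC ler_pM2l ?ltr_wpDr ?orbit_norm_ge0 //.
  have <- : k * (2 * k)^-1 = 2^-1 by field; rewrite gt_eqF.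
  by rewrite ler_pM2l // ltW.
move=> x vx; exists (k * `|x| * (1 + (1 + \sum_(i < m) orbit_norm H i))) => r.
apply: le_trans (dom x r vx) _; apply: ler_wpM2l.
  exact: mulr_ge0 (ltW k_gt0) (normr_ge0 x).
rewrite lerD2l; apply: (halving_bounded m_gt0 _ halving) => i; exact: orbit_norm_ge0.
Qed.

Variable z0 : X.
Hypotheses (z0_vanishing : vanishing z0)
  (z0_unbounded : ~ exists B, forall r, `|iter r T z0| <= B).

Lemma exists_outgrowing (H : seq X) (L eta : K) : {in H, forall h, vanishing h} ->
  0 < L -> 0 < eta ->
  exists r g, [/\ vanishing g, `|g| <= eta & L * (1 + orbit_norm H r) <= `|iter r T g|].
Proof.
move=> vH L_gt0 eta_gt0; apply: contrapT => none; apply: z0_unbounded.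
suff dom x r : vanishing x -> `|iter r T x| <= L / eta * `|x| * (1 + orbit_norm H r).
  exact: dominated_orbits_bounded (divr_gt0 L_gt0 eta_gt0) vH dom _ z0_vanishing.
move=> vx; have [->|x_neq0] := eqVneq x 0.
  by rewrite (raddf0 (iter r T)) !normr0 mulr0 mul0r.
have nx_gt0 : 0 < `|x| by rewrite normr_gt0.
have a_ge0 : 0 <= eta / `|x| by rewrite divr_ge0 // ltW.
pose g := (eta / `|x|) *: x.
have vg : vanishing g by have := vanishingP (eta / `|x|) vx (vanishing0 T p); rewrite addr0.
have gT_lt : `|iter r T g| < L * (1 + orbit_norm H r).
  have rhs_ge0 : 0 <= L * (1 + orbit_norm H r).
    by rewrite mulr_ge0 ?addr_ge0 ?orbit_norm_ge0 // ltW.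
  rewrite real_ltNge ?normr_real ?ger0_real //.
  apply/negP => gT_ge; apply: none; exists r, g; split=> //.
  by rewrite /g normrZ ger0_norm // -mulrA mulVf ?mulr1 // gt_eqF.
have -> : `|iter r T x| = `|x| / eta * `|iter r T g|.
  rewrite iter_linearZ normrZ ger0_norm // mulrA.
  by rewrite (_ : _ * (eta / _) = 1) ?mul1r //; field; rewrite !gt_eqF.
rewrite (_ : L / eta * _ * _ = `|x| / eta * (L * (1 + orbit_norm H r))); last by ring.
by apply: ler_wpM2l; [rewrite divr_ge0 // ltW | exact: ltW].
Qed.

Lemma exists_stage (H : seq X) j (eta : K) : {in H, forall h, vanishing h} -> 0 < eta ->
  exists g r m, [/\ vanishing g, `|g| <= eta,
    j.+1%:R * (1 + orbit_norm H r) <= `|iter r T g|, (j <= m)%N &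
    orbit_norm (g :: H) m <= j.+1%:R^-1].
Proof.
move=> vH eta_gt0; have [r [g [vg g_le g_ge]]] := exists_outgrowing vH (ltr0Sn K j) eta_gt0.
have vgH : {in g :: H, forall h, vanishing h} by move=> h; rewrite inE => /predU1P[->|/vH].
have inv_gt0 : 0 < j.+1%:R^-1 :> K by rewrite invr_gt0.
have [m jm m_small] := orbit_norm_late_small T_cont j vgH inv_gt0.
by exists g, r, m; split => //; exact: ltW.
Qed.

End OutgrowingVectors.

Section Schedule.
Variables (K : numFieldType) (X : normedModType K).
Variables (c : K) (x g : nat -> X) (r m : nat -> nat).

Definition budget j := \sum_(0 <= i < j) (c ^+ r i + c ^+ m i).
Definition past j := [seq x k | k <- iota 0 j.+1] ++ [seq g i | i <- iota 0 j].

End Schedule.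

Section PerturbedSeries.
Variables (K : numFieldType) (X : completeNormedModType K) (T : {linear X -> X}).
Hypothesis T_cont : continuous T.
Variable c : K.
Hypotheses (c_ge0 : 0 <= c) (normT_le : forall x, `|T x| <= c * `|x|).
Hypothesis archi : Num.archimedean_axiom K.
Variables (x : nat -> X) (w : nat -> K).
Hypotheses (w_gt0 : forall k, 0 < w k) (w_le1 : forall k, w k <= 1).
Variables (g : nat -> X) (r m : nat -> nat).
Local Notation orbit_norm := (orbit_norm T).
Local Notation target j := (logn 2 j.+1).
Local Notation budget := (budget c r m).
Local Notation past := (past x g).

(* budget j bounds c ^+ t for every time t used at a stage before j, so the
   factor 1 / (1 + budget j) in g_small keeps the later bumps negligible at
   those times. *)
Hypotheses
  (g_small : forall j, `|g j| <= w (target j) / 2 ^+ j.+1 / (1 + budget j))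
  (g_large : forall j,
     j.+1%:R * (1 + orbit_norm (past j) (r j)) <= `|iter (r j) T (g j)|)
  (m_late : forall j, (j <= m j)%N)
  (m_small : forall j, orbit_norm (g j :: past j) (m j) <= j.+1%:R^-1).

Lemma budget_ge0 j : 0 <= budget j.
Proof. by apply: sumr_ge0 => i _; rewrite addr_ge0 ?exprn_ge0. Qed.

Lemma budget_le N i : (N <= i)%N -> budget N <= budget i.
Proof.
move=> Ni; rewrite /budget (big_cat_nat (leq0n N) Ni) /= lerDl.
by apply: sumr_ge0 => l _; rewrite addr_ge0 ?exprn_ge0.
Qed.

Lemma budget_step_le j : c ^+ r j + c ^+ m j <= 1 + budget j.+1.
Proof. by rewrite /budget big_nat_recr //= addrA lerDr addr_ge0 ?budget_ge0. Qed.

Lemma pow_r_le j : c ^+ r j <= 1 + budget j.+1.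
Proof. by apply: le_trans (budget_step_le j); rewrite lerDl exprn_ge0. Qed.

Lemma pow_m_le j : c ^+ m j <= 1 + budget j.+1.
Proof. by apply: le_trans (budget_step_le j); rewrite lerDr exprn_ge0. Qed.

Lemma norm_iter_g_le t N i : c ^+ t <= 1 + budget N -> (N <= i)%N ->
  `|iter t T (g i)| <= w (target i) / 2 ^+ i.+1.
Proof.
move=> ct Ni; have b_gt0 : 0 < 1 + budget i by rewrite ltr_wpDr ?budget_ge0.
apply: le_trans (norm_iter_le c_ge0 normT_le _ _) _.
apply: le_trans (ler_wpM2l (exprn_ge0 _ c_ge0) (g_small i)) _.
rewrite mulrC mulrAC ler_pdivrMr //; apply: ler_wpM2l.
  by rewrite divr_ge0 ?exprn_ge0 // ltW.
by rewrite (le_trans ct) // lerD2l budget_le.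
Qed.

Lemma w_div_pow2_le k N : w k / 2 ^+ N <= (2 ^+ N)^-1.
Proof. by rewrite ler_piMl ?invr_ge0 ?exprn_ge0. Qed.

Definition partial_sum k N := x k + \sum_(0 <= i < N | target i == k) g i.
Definition perturbed k := lim (partial_sum k @ \oo).

Lemma norm_iter_partial_sumB_le k t N N' : c ^+ t <= 1 + budget N -> (N <= N')%N ->
  `|iter t T (partial_sum k N' - partial_sum k N)| <= w k / 2 ^+ N.
Proof.
move=> ct NN'; rewrite /partial_sum (big_cat_nat (leq0n N) NN') /=.
rewrite opprD addrACA subrr add0r addrC addKr.
rewrite raddf_sum (le_trans (ler_norm_sum _ _ _)) //= big_mkcond /=.
apply: (@le_trans _ _ (\sum_(N <= i < N') w k / 2 ^+ i.+1)).
  apply: ler_sum_nat => i /andP[Ni _]; case: eqP => [<-|_].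
    exact: norm_iter_g_le ct Ni.
  by rewrite divr_ge0 ?exprn_ge0 ?ltW.
by rewrite -mulr_sumr; apply: ler_wpM2l; [exact: ltW | exact: sum_inv_pow2_le].
Qed.

Lemma partial_sum_cvg k : cvg (partial_sum k @ \oo).
Proof.
apply: cauchy_cvg; apply: cauchy_exP => e e_gt0.
have [N Ne] := archi_inv_pow2_lt archi e_gt0.
exists (partial_sum k N); exists N => // n Nn; rewrite /= -ball_normE /= distrC.
have := norm_iter_partial_sumB_le (t := 0) k _ Nn.
rewrite expr0 lerDl budget_ge0 => /(_ isT).
by move/le_trans/(_ (w_div_pow2_le _ _))/le_lt_trans; apply.
Qed.

Lemma norm_iter_perturbed_sub_le k t N : c ^+ t <= 1 + budget N ->
  `|iter t T (perturbed k - partial_sum k N)| <= w k / 2 ^+ N.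
Proof.
move=> ct.
apply: (@norm_lim_le _ _ (fun n => iter t T (partial_sum k n - partial_sum k N))).
  apply: continuous_cvg; first exact: continuous_iter.
  by apply: cvgB; [exact: partial_sum_cvg | exact: cvg_cst].
by near=> n; apply: norm_iter_partial_sumB_le ct _; near: n; exact: nbhs_infty_ge.
Unshelve. all: by end_near.
Qed.

Lemma perturbed_near k : `|perturbed k - x k| <= w k.
Proof.
have := norm_iter_perturbed_sub_le k (t := 0) (N := 0); rewrite expr0 lerDl budget_ge0.
by rewrite /partial_sum big_geq // addr0 divr1 => /(_ isT).
Qed.

Lemma norm_iter_partial_sum_le k j t : (k <= j)%N ->
  `|iter t T (partial_sum k j)| <= orbit_norm (past j) t.
Proof.
move=> kj; rewrite /partial_sum /orbit_norm /past big_cat !big_map raddfD.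
apply: le_trans (ler_normD _ _) (lerD _ _).
  by rewrite (bigD1_seq k) ?mem_iota ?iota_uniq //= lerDl sumr_ge0.
rewrite raddf_sum (le_trans (ler_norm_sum _ _ _)) // /index_iota subn0 [leLHS]big_mkcond.
by apply: ler_sum => i _; case: ifP.
Qed.

Lemma partial_sumS k j :
  partial_sum k j.+1 = partial_sum k j + (if target j == k then g j else 0).
Proof. by rewrite /partial_sum big_mkcond big_nat_recr //= -big_mkcond addrA. Qed.

Lemma norm_iter_partial_sumS_le k j t : (k <= j)%N ->
  `|iter t T (partial_sum k j.+1)| <= orbit_norm (g j :: past j) t.
Proof.
move=> kj; rewrite /orbit_norm big_cons addrC -/(orbit_norm _ t) partial_sumS raddfD.
rewrite (le_trans (ler_normD _ _)) // lerD ?norm_iter_partial_sum_le //.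
by case: ifP => _ //; rewrite (raddf0 (iter t T)) normr0.
Qed.

Lemma norm_iter_m_perturbed_le k i : (k <= i)%N ->
  `|iter (m i) T (perturbed k)| <= i.+1%:R^-1 *+ 2.
Proof.
move=> ki; rewrite -[perturbed k](subrK (partial_sum k i.+1)) raddfD mulr2n.
rewrite (le_trans (ler_normD _ _)) // lerD //.
  apply: le_trans (norm_iter_perturbed_sub_le _ (pow_m_le i)) _.
  exact: le_trans (w_div_pow2_le _ _) (inv_pow2S_le _ i).
exact: le_trans (norm_iter_partial_sumS_le _ ki) (m_small i).
Qed.

Lemma comb_iter_small n (a : nat -> K) e N : 0 < e ->
  exists2 t, (N <= t)%N & `|iter t T (\sum_(k < n) a k *: perturbed k)| < e.
Proof.
move=> e_gt0; set A := \sum_(k < n) `|a k|.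
have A_ge0 : 0 <= A by exact: sumr_ge0.
have Ae_real : A *+ 2 / e \is Num.real by rewrite ger0_real // divr_ge0 ?mulrn_wge0 // ltW.
near \oo => i.
exists (m i); first by rewrite (leq_trans _ (m_late i)) //; near: i; exact: nbhs_infty_ge.
apply: le_lt_trans (norm_iter_comb_le T n a perturbed (m i)) _.
apply: (@le_lt_trans _ _ (A * (i.+1%:R^-1 *+ 2))).
  rewrite /A mulr_suml; apply: ler_sum => k _; apply: ler_wpM2l => //.
  apply: norm_iter_m_perturbed_le; rewrite ltnW // (leq_trans (ltn_ord k)) //.
  by near: i; exact: nbhs_infty_ge.
rewrite mulrnAr -mulrnAl ltr_pdivrMr ?ltr0n // mulrC -ltr_pdivrMr //.
rewrite (@lt_le_trans _ _ i%:R) ?ler_nat //.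
by near: i; exact: archi_nat_gt.
Unshelve. all: by end_near.
Qed.

Lemma norm_iter_r_perturbed_sub_le k j :
  `|iter (r j) T (perturbed k - partial_sum k j.+1)| <= 1.
Proof.
apply: le_trans (norm_iter_perturbed_sub_le k (pow_r_le j)) _.
by rewrite (le_trans (w_div_pow2_le _ _)) // invf_le1 ?exprn_gt0 // exprn_ege1 // ler1n.
Qed.

Lemma norm_iter_r_comb_ge n (a : nat -> K) (ks : 'I_n) j : (n <= j)%N -> target j = ks ->
  (`|a ks| * j.+1%:R - \sum_(k < n) `|a k|) * (1 + orbit_norm (past j) (r j)) <=
    `|iter (r j) T (\sum_(k < n) a k *: perturbed k)|.
Proof.
move=> nj tj; pose rest k := perturbed k - partial_sum k j.+1 + partial_sum k j.
have -> : \sum_(k < n) a k *: perturbed k = a ks *: g j + \sum_(k < n) a k *: rest k.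
  have perturbedE k : perturbed k = rest k + (if target j == k then g j else 0).
    by rewrite /rest -addrA -partial_sumS subrK.
  under eq_bigr do rewrite perturbedE scalerDr.
  rewrite big_split /= addrC (bigD1 ks) //= tj eqxx big1 ?addr0 // => k kks.
  by case: eqP => [/val_inj ksk|_]; [rewrite ksk eqxx in kks | exact: scaler0].
rewrite raddfD mulrBl; apply: le_trans (lerB_normD _ _); apply: lerB.
  by rewrite /= iter_linearZ normrZ -mulrA; apply: ler_wpM2l => //; exact: g_large.
apply: le_trans (norm_iter_comb_le T n a rest (r j)) _; rewrite mulr_suml.
apply: ler_sum => k _; apply: ler_wpM2l => //.
rewrite raddfD (le_trans (ler_normD _ _)) // lerD ?norm_iter_r_perturbed_sub_le //.
by apply: norm_iter_partial_sum_le; rewrite ltnW // (leq_trans (ltn_ord k)).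
Qed.

Lemma comb_iter_unbounded n (a : nat -> K) : \sum_(k < n) a k *: perturbed k != 0 ->
  forall M, M \is Num.real -> exists t, M < `|iter t T (\sum_(k < n) a k *: perturbed k)|.
Proof.
move=> comb_neq0 M Mr.
have /existsP[ks aks_neq0] : [exists k : 'I_n, a k != 0].
  apply: contraNT comb_neq0 => /existsPn a0; apply/eqP/big1 => k _.
  by rewrite (eqP (negPn (a0 k))) scale0r.
have aks_gt0 : 0 < `|a ks| by rewrite normr_gt0.
set A := \sum_(k < n) `|a k|; set Q := `|M| + 1 + A.
have A_ge0 : 0 <= A by exact: sumr_ge0.
have Qa_real : Q / `|a ks| \is Num.real by rewrite ger0_real // divr_ge0 // !addr_ge0.
have [N0 _ N0Q] := archi_nat_gt archi Qa_real.
have [j nN0j tj] := logn2S_infinitely_often ks (maxn n N0).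
have Q_le : Q <= `|a ks| * j.+1%:R.
  rewrite mulrC -ler_pdivrMr // ltW //.
  by rewrite (lt_le_trans (N0Q j (leq_trans (leq_maxr n N0) nN0j))) ?ler_nat.
exists (r j).
apply: lt_le_trans (norm_iter_r_comb_ge a (leq_trans (leq_maxl n N0) nN0j) tj).
have Ms_ge0 : 0 <= orbit_norm (past j) (r j) by exact: orbit_norm_ge0.
rewrite (le_lt_trans (real_ler_norm Mr)) // (@lt_le_trans _ _ (`|M| + 1)) ?ltrDl //.
rewrite (le_trans _ (ler_wpM2r _ (lerB Q_le (lexx A)))) ?addr_ge0 //.
by rewrite /Q addrK ler_peMr ?addr_ge0 // lerDl.
Qed.

Definition perturbed_span : set X :=
  [set v | exists n (a : nat -> K), v = \sum_(k < n) a k *: perturbed k].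

Lemma perturbed_span_subspace : vector_subspace perturbed_span.
Proof.
split; first by exists 0%N, (fun=> 0); rewrite big_ord0.
move=> b _ _ [n1 [a1 ->]] [n2 [a2 ->]].
have widen (a : nat -> K) n : (n <= n1 + n2)%N ->
    \sum_(k < n1 + n2) (if (k < n)%N then a k else 0) *: perturbed k =
    \sum_(k < n) a k *: perturbed k.
  move=> nn; rewrite (big_ord_widen _ (fun k => a k *: perturbed k) nn) [RHS]big_mkcond /=.
  by apply: eq_bigr => k _; case: ifP => _; rewrite ?scale0r.
exists (n1 + n2)%N,
  (fun k => b * (if (k < n1)%N then a1 k else 0) + (if (k < n2)%N then a2 k else 0)).
rewrite -(widen a1 _ (leq_addr n2 n1)) -(widen a2 _ (leq_addl n1 n2)).
by rewrite scaler_sumr -big_split /=; apply: eq_bigr => k _; rewrite scalerDl scalerA.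
Qed.

Lemma perturbed_span_irregular : irregular_manifold T perturbed_span.
Proof.
split; first exact: perturbed_span_subspace.
move=> _ [n [a ->]] comb_neq0; split; first by move=> e e_gt0 N; exact: comb_iter_small.
apply: unbounded_from => [t|]; first exact: normr_ge0.
by apply: comb_iter_unbounded; apply/eqP.
Qed.

End PerturbedSeries.

Section Bumps.
Variables (K : numFieldType) (X : normedModType K) (T : {linear X -> X}) (p : nat -> nat).
Hypothesis T_cont : continuous T.
Variable z0 : X.
Hypotheses (z0_vanishing : vanishing T p z0)
  (z0_unbounded : ~ exists B, forall r, `|iter r T z0| <= B).
Variable c : K.
Hypothesis c_ge0 : 0 <= c.
Variables (x : nat -> X) (w : nat -> K).
Hypotheses (x_vanishing : forall k, vanishing T p (x k)) (w_gt0 : forall k, 0 < w k).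

Lemma exists_bumps : exists (g : nat -> X) (r m : nat -> nat),
  [/\ forall j, `|g j| <= w (logn 2 j.+1) / 2 ^+ j.+1 / (1 + budget c r m j),
      forall j, j.+1%:R * (1 + orbit_norm T (past x g j) (r j)) <= `|iter (r j) T (g j)|,
      forall j, (j <= m j)%N &
      forall j, orbit_norm T (g j :: past x g j) (m j) <= j.+1%:R^-1].
Proof.
pose fam (s : seq (X * nat * nat)) :=
  [seq x k | k <- iota 0 (size s).+1] ++ [seq u.1.1 | u <- s].
pose cost (s : seq (X * nat * nat)) := \sum_(u <- s) (c ^+ u.1.2 + c ^+ u.2).
pose P s (a : X * nat * nat) :=
  [/\ `|a.1.1| <= w (logn 2 (size s).+1) / 2 ^+ (size s).+1 / (1 + cost s),
      (size s).+1%:R * (1 + orbit_norm T (fam s) a.1.2) <= `|iter a.1.2 T a.1.1|,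
      (size s <= a.2)%N &
      orbit_norm T (a.1.1 :: fam s) a.2 <= (size s).+1%:R^-1].
have extend (s : seq (X * nat * nat)) : {in s, forall a, vanishing T p a.1.1} ->
    exists2 a, vanishing T p a.1.1 & P s a.
  move=> vs.
  have v_fam : {in fam s, forall h, vanishing T p h}.
    move=> h; rewrite mem_cat => /orP[/mapP[k _ ->]|/mapP[u us ->]].
      exact: x_vanishing.
    exact: vs.
  have eta_gt0 : 0 < w (logn 2 (size s).+1) / 2 ^+ (size s).+1 / (1 + cost s).
    rewrite !divr_gt0 ?exprn_gt0 // ltr_wpDr // sumr_ge0 // => u _.
    by rewrite addr_ge0 ?exprn_ge0.
  have [g [r [m [vg g_le g_ge sm m_small]]]] :=
    exists_stage T_cont z0_vanishing z0_unbounded (size s) v_fam eta_gt0.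
  by exists (g, r, m).
have [f fP] := dependent_choice_seq extend.
exists (fun j => (f j).1.1), (fun j => (f j).1.2), (fun j => (f j).2).
have famE j : fam [seq f i | i <- iota 0 j] = past x (fun i => (f i).1.1) j.
  by rewrite /fam size_map size_iota -map_comp.
have costE j : cost [seq f i | i <- iota 0 j] =
    budget c (fun i => (f i).1.2) (fun i => (f i).2) j.
  by rewrite /cost big_map /budget /index_iota subn0.
by split => j; have [_ []] := fP j; rewrite size_map size_iota famE costE.
Qed.

End Bumps.

Theorem exists_irregular_perturbation (K : numFieldType) (X : completeNormedModType K)
    (T : {linear X -> X}) (p : nat -> nat) (z0 : X) (x : nat -> X) (w : nat -> K) :
  Num.archimedean_axiom K -> continuous T ->
  vanishing T p z0 -> ~ (exists B, forall r, `|iter r T z0| <= B) ->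
  (forall k, vanishing T p (x k)) -> (forall k, 0 < w k) -> (forall k, w k <= 1) ->
  exists (Y : set X) (y : nat -> X),
    [/\ irregular_manifold T Y, forall k, Y (y k) & forall k, `|y k - x k| <= w k].
Proof.
move=> archi T_cont z0_van z0_unb x_van w_gt0 w_le1.
have [c c_ge0 normT_le] := continuous_linear_bound T_cont.
have [g [r [m [g_small g_large m_late m_small]]]] :=
  exists_bumps T_cont z0_van z0_unb c_ge0 x_van w_gt0.
exists (perturbed_span x g), (perturbed x g); split.
- by have := perturbed_span_irregular T_cont c_ge0 normT_le archi w_gt0 w_le1
    g_small g_large m_late m_small.
- move=> k; exists k.+1, (fun i => (i == k)%:R).
  rewrite big_ord_recr /= eqxx scale1r big1 ?add0r // => i _.
  by rewrite (ltn_eqF (ltn_ord i)) scale0r.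
- by have := perturbed_near T_cont c_ge0 normT_le archi x w_gt0 w_le1 g_small.
Qed.

Lemma separable_dense_net (K : numFieldType) (X : normedModType K) (A : set X) :
  Num.archimedean_axiom K -> separable_space X -> dense A ->
  exists (x : nat -> X) (w : nat -> K), [/\ forall k, A (x k), forall k, 0 < w k,
    forall k, w k <= 1 &
    forall y : nat -> X, (forall k, `|y k - x k| <= w k) -> dense (range y)].
Proof.
move=> archi [D [cD dD]] dA.
have [d d_onto] : exists d : nat -> X, forall z (e : K), 0 < e -> exists i, `|d i - z| < e.
  have /pcard_surjP[d d_onto] := cD; exists d => z e e_gt0.
  have [v [zv Dv]] := dD (ball z e) (ex_intro _ z (ballxx _ e_gt0)) (ball_open _ _).
  have [i _ div] := d_onto v Dv; exists i; rewrite div.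
  by move: zv; rewrite -ball_normE /= distrC.
(* x_k approximates d_i within 2^-n, where k encodes the pair (i, n). *)
pose code k := odflt (0, 0)%N (@unpickle (nat * nat)%type k).
pose w k : K := (2 ^+ (code k).2)^-1.
have w_gt0 k : 0 < w k by rewrite invr_gt0 exprn_gt0.
have near_d k : exists v, A v /\ `|v - d (code k).1| < w k.
  have [v [dv Av]] := dA (ball (d (code k).1) (w k)) (ex_intro _ _ (ballxx _ (w_gt0 k)))
    (ball_open _ _).
  by exists v; split => //; move: dv; rewrite -ball_normE /= distrC.
have [x xP] := choice near_d.
exists x, w; split => [k|//|k|y yx]; first by case: (xP k).
  by rewrite invf_le1 ?exprn_gt0 // exprn_ege1 // ler1n.
move=> O [z Oz] oO.
have [e e_gt0 zeO] := (nbhs_ballP z O).1 (open_nbhs_nbhs (conj oO Oz)).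
have e3_gt0 : 0 < e / 3 by rewrite divr_gt0.
have [i di] := d_onto z _ e3_gt0.
have [n n_lt] := archi_inv_pow2_lt archi e3_gt0.
set k := pickle (i, n); have ck : code k = (i, n) by rewrite /code pickleK.
have wk : w k < e / 3 by rewrite /w ck.
have xk : `|x k - d i| < e / 3 by case: (xP k); rewrite ck => _ /lt_trans; apply.
exists (y k); split; last by exists k.
apply: zeO; rewrite -ball_normE /= distrC.
have -> : y k - z = (y k - x k) + ((x k - d i) + (d i - z)) by rewrite !addrA !subrK.
have <- : e / 3 + (e / 3 + e / 3) = e by field.
rewrite (le_lt_trans (ler_normD _ _)) // ler_ltD ?(le_trans (yx k)) ?ltW //.
by rewrite (le_lt_trans (ler_normD _ _)) // ltrD.
Qed.

Lemma unif_LY_vanishing (K : numFieldType) (X : normedModType K) (T : {linear X -> X}) :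
  densely_unif_LY_chaotic T -> exists p z0,
    [/\ vanishing T p z0, ~ (exists B, forall r, `|iter r T z0| <= B) &
         dense (vanishing T p)].
Proof.
move=> [S [dS [_ [[x1 [y1 [Sx1 [Sy1 x1y1]]]] [p [q pq]]]]]].
have iterB n u v : iter n T (u - v) = iter n T u - iter n T v by rewrite raddfB.
have vanishingB u v : S u -> S v -> vanishing T p (u - v).
  move=> Su Sv; have [->|uv] := eqVneq u v; first by rewrite subrr; exact: vanishing0.
  apply/norm_cvg0P; under eq_fun do rewrite iterB.
  exact: (pq u v Su Sv (elimN eqP uv)).1.
exists p, (x1 - y1); split; first exact: vanishingB.
  move=> [B orbitB]; have [_ /(_ [set s | B < s])] := pq x1 y1 Sx1 Sy1 x1y1.
  case=> [|N _ /(_ N (leqnn N))/=].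
    by exists B; split => //; exact: ger0_real (le_trans (normr_ge0 _) (orbitB 0%N)).
  by rewrite -iterB => /lt_le_trans/(_ (orbitB _)); rewrite ltxx.
move=> O [z Oz] oO.
have [e e_gt0 zeO] := (nbhs_ballP z O).1 (open_nbhs_nbhs (conj oO Oz)).
have [s [zs Ss]] := dS (ball (z + x1) e) (ex_intro _ _ (ballxx _ e_gt0)) (ball_open _ _).
exists (s - x1); split; last exact: vanishingB.
by apply: zeO; move: zs; rewrite -!ball_normE /= opprB addrA.
Qed.

Theorem dense_irregular_manifold (K : numFieldType) (X : completeNormedModType K)
    (T : {linear X -> X}) :
  Num.archimedean_axiom K -> separable_space X -> continuous T ->
  densely_unif_LY_chaotic T -> exists Y : set X, dense Y /\ irregular_manifold T Y.
Proof.
move=> archi sepX T_cont /unif_LY_vanishing[p [z0 [z0_van z0_unb van_dense]]].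
have [x [w [x_van w_gt0 w_le1 net_dense]]] := separable_dense_net archi sepX van_dense.
have [Y [y [irrY Yy yx]]] :=
  exists_irregular_perturbation archi T_cont z0_van z0_unb x_van w_gt0 w_le1.
exists Y; split => //; apply: dense_subset (net_dense y yx).
by move=> _ [k _ <-].
Qed.

Lemma archimedean_scalars (R : realType) (k : scalar_kind) :
  Num.archimedean_axiom (scalars R k).
Proof.
case: k => /= z.
  by exists (Num.bound `|z|); exact: archi_boundP.
have [r ->] := complex_realP _ (normr_real z).
exists (Num.bound `|r|); rewrite -(rmorph_nat (@real_complex R)) ltcR.
by apply: le_lt_trans (ler_norm r) _; exact: archi_boundP.
Qed.

Theorem corollary3p6 (R : realType) (k : scalar_kind)
  (X : completeNormedModType (scalars R k))
  (T : {linear X -> X}) :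
  separable_space X ->
  continuous T ->
  densely_unif_LY_chaotic T ->
  exists Y : set X, dense Y /\ irregular_manifold T Y.
Proof. by apply: dense_irregular_manifold; exact: archimedean_scalars. Qed.
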